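(* Let $M\subseteq[r]^d$ be a dot array satisfying (P1) and (P3), and suppose $M$ contains a sparse permutation array $P$ of rank $r$ and dimension $d$. Then $M=\overline P$.
   Context: Let $[r]=\{0,\dots,r\}$. $[r]^d$ is partially ordered coordinatewise, with meet $\mathbf x\wedge\mathbf y=(\min(x_i,y_i))_i$. A dot array is a subset of $[r]^d$. Let $\mathrm{rk}_iP$ be one less than the number of distinct values of the $i$-th coordinate among elements of $P$. $P$ is rankable of rank $s$ if all $\mathrm{rk}_iP=s$. $P$ is totally rankable if every principal subarray $P[\mathbf x]=\{\mathbf y\in P:\mathbf y\succeq\mathbf x\}$ is rankable. A point $\mathbf x\in[r]^d$ is redundant for $P$ if $\mathbf x=\bigwedge\mathcal H$ for some $\mathcal H\subseteq P$ with $|\mathcal H|\ge2$ such that every member of $\mathcal H$ shares at least one coordinate with $\mathbf x$. $R(P)$ is the set of redundant points. A permutation array of rank $r$ and dimension $d$ is a totally rankable $P\subseteq[r]^d$ of rank $r$ containing no redundant point. Its redundant closure is $\overline P=P\cup R(P)$. A permutation array is sparse if for every coordinate $i$ and every $c\in[r]$ exactly one element of $P$ has $i$-th coordinate $c$. Properties of a dot array $M$: (P1) $M$ is closed under the meet $\wedge$. (P3) every set $S$ of $r+2$ elements of $M$ contains a subset $S'$ (with at least two elements) such that for every $1\le i\le d$ the value $\min\{x_i:\mathbf x\in S'\}$ is attained by at least two elements of $S'$. *)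

From mathcomp Require Import all_boot all_order all_algebra.
Set Implicit Arguments. Unset Strict Implicit. Unset Printing Implicit Defensive.

(* Points of [r]^d, where [r] = {0,...,r} is 'I_r.+1 and coordinates are 'I_d. *)
Definition point (r d : nat) := {ffun 'I_d -> 'I_r.+1}.

Section DotArrays.
Variables r d : nat.
Local Notation pt := (point r d).

Definition pt_le (x y : pt) : bool := [forall i, x i <= y i].

Definition pt_meet (x y : pt) : pt := [ffun i => inord (minn (x i) (y i))].

Definition pt_top : pt := [ffun _ => ord_max].

Definition set_meet (H : {set pt}) : pt := \big[pt_meet/pt_top]_(y in H) y.

Definition rk (P : {set pt}) (i : 'I_d) : int :=
  (#|[set (y : pt) i | y in P]|%:Z - 1)%R.

Definition rankable_of_rank (P : {set pt}) (s : int) : Prop :=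
  forall i : 'I_d, rk P i = s.

Definition rankable (P : {set pt}) : Prop := exists s : int, rankable_of_rank P s.

Definition principal (P : {set pt}) (x : pt) : {set pt} :=
  [set y in P | pt_le x y].

Definition totally_rankable (P : {set pt}) : Prop :=
  forall x : pt, rankable (principal P x).

Definition redundant (P : {set pt}) (x : pt) : bool :=
  [exists H : {set pt}, [&& H \subset P, 2 <= #|H|, x == set_meet H &
     [forall y in H, [exists i : 'I_d, y i == x i]]]].

Definition redundant_set (P : {set pt}) : {set pt} :=
  [set x | redundant P x].

Definition permutation_array (P : {set pt}) : Prop :=
  [/\ totally_rankable P, rankable_of_rank P r%:Z &
      forall x, x \in P -> ~ redundant P x].

Definition redundant_closure (P : {set pt}) : {set pt} :=
  P :|: redundant_set P.

Definition sparse (P : {set pt}) : Prop :=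
  forall (i : 'I_d) (c : 'I_r.+1), #|[set y in P | y i == c]| = 1.

Definition P1 (M : {set pt}) : Prop :=
  forall x y, x \in M -> y \in M -> pt_meet x y \in M.

Definition P3 (M : {set pt}) : Prop :=
  forall S : {set pt}, S \subset M -> #|S| = r.+2 ->
    exists S' : {set pt}, [/\ S' \subset S, 2 <= #|S'| &
      forall i : 'I_d,
        2 <= #|[set x in S' | x i == (set_meet S') i]| ].

End DotArrays.

From HB Require Import structures.
From mathcomp Require Import all_boot all_order all_algebra.
Set Implicit Arguments. Unset Strict Implicit. Unset Printing Implicit Defensive.

(* Meets of subsets of M lie in M by (P1), so the redundant closure of P is
   contained in M.  Conversely let x be a point of M outside P.  Since P is
   sparse it has exactly r+1 elements, so (P3) applies to x |: P and yields a
   subset S' in which, for every coordinate i, the minimum is attained twice.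
   Two distinct points of a sparse array never share a coordinate, so one of
   the two minimisers is x and the other is a point of P agreeing with x in
   coordinate i.  The points of P in S' sharing some coordinate with x then
   have meet x, which exhibits x as redundant. *)

HB.instance Definition _ := SemiGroup.isComLaw.Build nat minn minnA minnC.

Section Meets.
Variables r d : nat.
Implicit Types (x y z : point r d) (H M P : {set point r d}).

Lemma pt_meetE x y i : (pt_meet x y i : nat) = minn (x i) (y i).
Proof. by rewrite ffunE inordK // ltnS (leq_trans (geq_minl _ _)) // -ltnS. Qed.

Lemma set_meetE H i : (set_meet H i : nat) = \big[minn/r]_(y in H) (y i : nat).
Proof.
apply: (big_morph (fun p : point r d => (p i : nat))); last by rewrite ffunE.
by move=> a b; rewrite pt_meetE.
Qed.

Lemma set_meet_le H z i : z \in H -> set_meet H i <= z i.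
Proof. by move=> zH; rewrite set_meetE (bigD1 z) //= geq_minl. Qed.

Lemma set_meet_coord H x i :
  (forall y, y \in H -> x i <= y i) -> (exists2 h, h \in H & h i = x i) ->
  set_meet H i = x i.
Proof.
move=> lb [h hH hx]; apply/val_inj/eqP; rewrite /= eqn_leq -{1}hx set_meet_le //=.
rewrite set_meetE; elim/big_ind: _ => [|a b xa xb|y /lb //].
- by rewrite -ltnS.
- by rewrite leq_min xa xb.
Qed.

Lemma pt_meet_top x : pt_meet x (pt_top r d) = x.
Proof.
by apply/ffunP=> i; apply: val_inj; rewrite /= pt_meetE ffunE; apply/minn_idPl; rewrite -ltnS.
Qed.

Lemma pt_top_meet x : pt_meet (pt_top r d) x = x.
Proof.
by apply/ffunP=> i; apply: val_inj; rewrite /= pt_meetE ffunE; apply/minn_idPr; rewrite -ltnS.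
Qed.

Lemma set_meet_closed M H : P1 M -> H \subset M -> H != set0 -> set_meet H \in M.
Proof.
move=> meetM sHM /set0Pn [h hH].
have [//|meetH_top] : set_meet H \in M \/ set_meet H = pt_top r d.
  rewrite /set_meet; elim/big_ind: _ => [|a b [aM|->] [bM|->]|y yH].
  - by right.
  - by left; apply: meetM.
  - by left; rewrite pt_meet_top.
  - by left; rewrite pt_top_meet.
  - by right; rewrite pt_meet_top.
  - by left; apply: (subsetP sHM).
suff -> : set_meet H = h by apply: (subsetP sHM).
apply/ffunP => i; apply/val_inj/eqP.
have := set_meet_le i hH; rewrite meetH_top ffunE /= => r_le.
by rewrite eqn_leq r_le -ltnS ltn_ord.
Qed.

Lemma redundant_set_sub M P : P1 M -> P \subset M -> redundant_set P \subset M.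
Proof.
move=> meetM sPM; apply/subsetP => x; rewrite inE.
case/existsP => H /and4P [sHP cardH /eqP -> _].
apply: set_meet_closed (subset_trans sHP sPM) _ => //.
by rewrite -card_gt0 (leq_trans _ cardH).
Qed.

End Meets.

Section Sparse.
Variables r d : nat.
Variable P : {set point r d}.
Hypothesis sparseP : sparse P.

Lemma sparse_coord_inj i y z : y \in P -> z \in P -> y i = z i -> y = z.
Proof.
move=> yP zP eyz.
have /cards1P [w Hw] : #|[set u in P | u i == z i]| == 1 by rewrite sparseP.
have : y \in [set u in P | u i == z i] by rewrite inE yP eyz eqxx.
have : z \in [set u in P | u i == z i] by rewrite inE zP eqxx.
by rewrite Hw !inE => /eqP-> /eqP->.
Qed.

Lemma card_sparse : 0 < d -> #|P| = r.+1.
Proof.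
move=> d_gt0; pose i0 := Ordinal d_gt0.
rewrite -(card_in_imset (f := fun y : point r d => y i0)); last first.
  by move=> y z yP zP; apply: sparse_coord_inj.
suff -> : [set (y : point r d) i0 | y in P] = [set: 'I_r.+1] by rewrite cardsT card_ord.
apply/setP => c; rewrite inE; apply/imsetP.
have /cards1P [w Hw] : #|[set u in P | u i0 == c]| == 1 by rewrite sparseP.
have : w \in [set u in P | u i0 == c] by rewrite Hw set11.
by rewrite inE => /andP [wP /eqP <-]; exists w.
Qed.

Variables (S : {set point r d}) (x : point r d).
Hypotheses (xNP : x \notin P) (sSxP : S \subset x |: P).
Hypothesis minS_twice :
  forall i, 2 <= #|[set y in S | y i == set_meet S i]|.

Lemma min_attained_by_x_and_P i :
  x i = set_meet S i /\ exists2 h, h \in P :&: S & h i = x i.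
Proof.
have inS u : u \in S -> u = x \/ u \in P.
  by move=> /(subsetP sSxP); rewrite !inE => /orP [/eqP|]; [left|right].
have /card_gt1P [y [z [+ + yNz]]] := minS_twice i.
rewrite !inE => /andP [yS /eqP ym] /andP [zS /eqP zm].
case: (inS y yS) => [ey|yP]; case: (inS z zS) => [ez|zP].
- by move: yNz; rewrite ey ez eqxx.
- by split; [rewrite -ey | exists z; rewrite ?inE ?zP ?zS // zm -ym ey].
- by split; [rewrite -ez | exists y; rewrite ?inE ?yP ?yS // ym -zm ez].
- by move: yNz; rewrite (sparse_coord_inj yP zP (etrans ym (esym zm))) eqxx.
Qed.

Lemma redundant_of_min_attained_twice : 0 < d -> redundant P x.
Proof.
move=> d_gt0; pose H := [set h in P :&: S | [exists i, h i == x i]].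
have inH i h : h \in P :&: S -> h i = x i -> h \in H.
  by move=> hPS hx; rewrite inE hPS; apply/existsP; exists i; rewrite hx.
apply/existsP; exists H; apply/and4P; split.
- by apply/subsetP => h; rewrite !inE => /andP [/andP [] ].
- have [h0 h0PS h0x] := (min_attained_by_x_and_P (Ordinal d_gt0)).2.
  have h0Nx : h0 != x by apply: contraNneq xNP => <-; case/setIP: h0PS.
  have [i h0xi] : exists i, h0 i != x i.
    apply/existsP; apply: contraR h0Nx => /existsPn same.
    by apply/eqP/ffunP => i; apply/eqP/negbNE/same.
  have [h hPS hx] := (min_attained_by_x_and_P i).2.
  apply/card_gt1P; exists h0, h; split; [exact: inH h0x | exact: inH hx |].
  by apply: contraNneq h0xi => ->; rewrite hx.
- apply/eqP/ffunP => i; apply/esym/set_meet_coord.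
  + move=> y; rewrite !inE => /andP [/andP [_ yS] _].
    by rewrite (min_attained_by_x_and_P i).1 set_meet_le.
  + by have [h hPS hx] := (min_attained_by_x_and_P i).2; exists h => //; apply: inH hx.
- by apply/forallP => y; apply/implyP; rewrite inE => /andP [_].
Qed.

End Sparse.

Theorem mainTheorem2 (r d : nat) (M P : {set point r d}) :
  0 < d ->
  P1 M -> P3 M ->
  P \subset M -> permutation_array P -> sparse P ->
  M = redundant_closure P.
Proof.
move=> d_gt0 meetM P3M sPM _ sparseP; apply/eqP.
rewrite eqEsubset /redundant_closure subUset sPM redundant_set_sub //= andbT.
apply/subsetP => x xM; rewrite !inE; have [//|xNP] /= := boolP (x \in P).
have sxPM : x |: P \subset M by rewrite subUset sub1set xM.
have card_xP : #|x |: P| = r.+2 by rewrite cardsU1 xNP card_sparse.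
have [S [sSxP _ minS_twice]] := P3M _ sxPM card_xP.
exact: redundant_of_min_attained_twice minS_twice d_gt0.
Qed.
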